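(* Let $n,m,p,N\in\mathbb{N}_+$, $B\in\mathbb{R}^{n\times m}$, $C\in\mathbb{R}^{p\times n}$ of full column rank, $x_0\in\mathbb{R}^n$, $r_1,\dots,r_N\in\mathbb{R}^p$, $r_0:=Cx_0$, $A^{\rm r}\in\mathbb{R}^{n\times n}$, $u^{\rm r}_0,\dots,u^{\rm r}_{N-1}\in\mathbb{R}^m$, $\omega,\omega_0,\dots,\omega_{N-1}\ge0$, and $\mathcal{S}_{\rm M2}\subseteq\mathbb{R}^{n\times n}\times\mathbb{R}^{m\times N}$. Problem (MOPUL2) is: minimize $\|A-A^{\rm r}\|_F$ over $A\in\mathbb{R}^{n\times n}$, $U=(u_0,\dots,u_{N-1})\in\mathbb{R}^{m\times N}$ subject to $x_t=Ax_{t-1}+Bu_{t-1}$ ($t=1,\dots,N$), $y_t=Cx_t$ ($t=0,\dots,N$), $\sum_{t=1}^N\|y_t-r_t\|_2\le\omega$, $\|u_t-u^{\rm r}_t\|_2\le\omega_t$ ($t=0,\dots,N-1$), and $(A,U)\in\mathcal{S}_{\rm M2}$. Let $\beta>0$, $\tilde\omega:=\omega/\big(\sum_{i=0}^{N-1}\beta^i\big)$, and let problem (AMOPUL2) be: minimize $\|A-A^{\rm r}\|_F$ over $(A,U)$ subject to $\sum_{t=1}^N\|CAC^{\dagger}r_{t-1}+CBu_{t-1}-r_t\|_2\le\tilde\omega$, $\|u_t-u^{\rm r}_t\|_2\le\omega_t$ ($t=0,\dots,N-1$), and $(A,U)\in\mathcal{S}_{\rm M2}$. If $\|CA^{\rm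 a}C^{\dagger}\|_2\le\beta$ for every feasible $A^{\rm a}$ of (AMOPUL2), then every feasible solution of (AMOPUL2) is feasible for (MOPUL2), and the optimal objective value of (AMOPUL2) is an upper bound for the optimal objective value of (MOPUL2).
   Context: $C^{\dagger}$ is the Moore–Penrose inverse of $C$; $\|\cdot\|_F$ is the Frobenius norm; $\|\cdot\|_2$ is the Euclidean norm for vectors and the spectral norm for matrices. In the paper $\mathcal{S}_{\rm M2}$ is assumed SD representable, though this is not used in the claim. *)

From HB Require Import structures.
From mathcomp Require Import all_boot all_order all_algebra.
From mathcomp Require Import all_classical reals ereal.
Set Implicit Arguments. Unset Strict Implicit. Unset Printing Implicit Defensive.
Import Order.TTheory GRing.Theory Num.Theory.
Local Open Scope ring_scope.

Section Defs.
Variable R : realType.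

Definition norm2 (k : nat) (v : 'cV[R]_k) : R :=
  Num.sqrt (\sum_(i < k) v i 0 ^+ 2).

Definition frob (a b : nat) (M : 'M[R]_(a, b)) : R :=
  Num.sqrt (\sum_(i < a) \sum_(j < b) M i j ^+ 2).

Definition specnorm (a b : nat) (M : 'M[R]_(a, b)) : R :=
  sup [set norm2 (M *m x) | x in [set x : 'cV[R]_b | norm2 x <= 1]].

Definition is_MP_inverse (a b : nat) (C : 'M[R]_(a, b)) (X : 'M[R]_(b, a)) : Prop :=
  [/\ C *m X *m C = C, X *m C *m X = X,
      (C *m X)^T = C *m X & (X *m C)^T = X *m C].

(* the t-th column u_t of U = (u_0, ..., u_{N-1}); 0 if t >= N (never used) *)
Definition ucol (m N : nat) (U : 'M[R]_(m, N)) (t : nat) : 'cV[R]_m :=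
  oapp (fun j : 'I_N => col j U) 0 (insub t).

Fixpoint traj (n m N : nat) (A : 'M[R]_n) (B : 'M[R]_(n, m)) (U : 'M[R]_(m, N))
    (x0 : 'cV[R]_n) (t : nat) : 'cV[R]_n :=
  match t with
  | 0 => x0
  | t'.+1 => A *m traj A B U x0 t' + B *m ucol U t'
  end.

Definition refout (n p : nat) (C : 'M[R]_(p, n)) (x0 : 'cV[R]_n)
    (r : nat -> 'cV[R]_p) (t : nat) : 'cV[R]_p :=
  if t == 0%N then C *m x0 else r t.

Definition feas_MOPUL2 (n m p N : nat) (B : 'M[R]_(n, m)) (C : 'M[R]_(p, n))
    (x0 : 'cV[R]_n) (r : nat -> 'cV[R]_p) (ur : nat -> 'cV[R]_m)
    (om : R) (omt : nat -> R) (S : set ('M[R]_n * 'M[R]_(m, N)))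
    (A : 'M[R]_n) (U : 'M[R]_(m, N)) : Prop :=
  [/\ \sum_(t < N) norm2 (C *m traj A B U x0 t.+1 - r t.+1) <= om,
      (forall t : 'I_N, norm2 (col t U - ur t) <= omt t)
    & S (A, U)].

Definition feas_AMOPUL2 (n m p N : nat) (B : 'M[R]_(n, m)) (C : 'M[R]_(p, n))
    (Cd : 'M[R]_(n, p)) (x0 : 'cV[R]_n) (r : nat -> 'cV[R]_p)
    (ur : nat -> 'cV[R]_m) (omtil : R) (omt : nat -> R)
    (S : set ('M[R]_n * 'M[R]_(m, N)))
    (A : 'M[R]_n) (U : 'M[R]_(m, N)) : Prop :=
  [/\ \sum_(t < N) norm2 (C *m A *m Cd *m refout C x0 r t
                          + C *m B *m ucol U t - r t.+1) <= omtil,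
      (forall t : 'I_N, norm2 (col t U - ur t) <= omt t)
    & S (A, U)].

End Defs.

(** Since C has full column rank, C^† C = I, so the output error
    d_t := C x_t - r_t satisfies d_0 = 0 and d_(t+1) = (C A C^†) d_t + e_t,
    where e_t is the t-th residual in the tracking constraint of (AMOPUL2).
    With ‖C A C^†‖₂ <= β this gives ‖d_(t+1)‖ <= β ‖d_t‖ + ‖e_t‖; unrolling and
    summing, Σ_(t=1..N) ‖d_t‖ <= (Σ_(i<N) β^i) Σ_t ‖e_t‖ <= (Σ_(i<N) β^i) ω̃ = ω.
    Hence every (AMOPUL2)-feasible pair is (MOPUL2)-feasible, and the infimum
    over the larger feasible set of (MOPUL2) is the smaller one. *)

From HB Require Import structures.
From mathcomp Require Import all_boot all_order all_algebra.
From mathcomp Require Import all_classical reals ereal.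
From mathcomp Require Import ring lra.
Import Order.TTheory GRing.Theory Num.Theory.
Local Open Scope ring_scope.
Local Open Scope classical_set_scope.

Set Implicit Arguments.
Unset Strict Implicit.

Section EuclideanNorm.
Variable R : realType.

Lemma norm2_ge0 k (v : 'cV[R]_k) : 0 <= norm2 v.
Proof. exact: sqrtr_ge0. Qed.

Lemma sqr_norm2 k (v : 'cV[R]_k) : norm2 v ^+ 2 = \sum_(i < k) v i 0 ^+ 2.
Proof. by rewrite sqr_sqrtr // sumr_ge0 // => i _; exact: sqr_ge0. Qed.

Lemma norm2_0 k : norm2 (0 : 'cV[R]_k) = 0.
Proof. by rewrite /norm2 big1 ?sqrtr0 // => i _; rewrite mxE expr0n. Qed.

Lemma norm2_eq0 k (v : 'cV[R]_k) : (norm2 v == 0) = (v == 0).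
Proof.
apply/eqP/eqP => [v0|->]; last exact: norm2_0.
have sum0 : \sum_(i < k) v i 0 ^+ 2 = 0 by rewrite -sqr_norm2 v0 expr0n.
apply/matrixP => i j; rewrite (ord1 j) mxE; apply/eqP; rewrite -sqrf_eq0.
by rewrite (psumr_eq0P (fun i _ => sqr_ge0 (v i 0)) sum0).
Qed.

Lemma norm2_gt0 k (v : 'cV[R]_k) : v != 0 -> 0 < norm2 v.
Proof. by move=> v0; rewrite lt0r norm2_eq0 v0 norm2_ge0. Qed.

Lemma norm2Z k (c : R) (v : 'cV[R]_k) : norm2 (c *: v) = `|c| * norm2 v.
Proof.
rewrite /norm2 -sqrtr_sqr -sqrtrM ?sqr_ge0 // mulr_sumr.
by congr Num.sqrt; apply: eq_bigr => i _; rewrite mxE exprMn.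
Qed.

Lemma norm2_coord k (v : 'cV[R]_k) j : `|v j 0| <= norm2 v.
Proof.
rewrite -sqrtr_sqr ler_sqrt -?sqr_norm2 ?sqr_ge0 // sqr_norm2.
by rewrite (bigD1 j) //= lerDl sumr_ge0 // => i _; exact: sqr_ge0.
Qed.

Lemma cauchy_schwarz_norm2 k (u v : 'cV[R]_k) :
  \sum_(i < k) u i 0 * v i 0 <= norm2 u * norm2 v.
Proof.
have [->|u0] := eqVneq u 0.
  by rewrite big1 ?norm2_0 ?mul0r // => i _; rewrite mxE mul0r.
have [->|v0] := eqVneq v 0.
  by rewrite big1 ?norm2_0 ?mulr0 // => i _; rewrite mxE mulr0.
set a := norm2 u; set b := norm2 v; set d := \sum_(i < k) _.
have ab_gt0 : 0 < a * b by rewrite mulr_gt0 ?norm2_gt0.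
(* 0 <= ‖b u - a v‖² = 2ab (ab - Σ_i u_i v_i) *)
have : 0 <= \sum_(i < k) (b * u i 0 - a * v i 0) ^+ 2.
  by apply: sumr_ge0 => i _; exact: sqr_ge0.
have -> : \sum_(i < k) (b * u i 0 - a * v i 0) ^+ 2 =
    b ^+ 2 * \sum_(i < k) u i 0 ^+ 2 + a ^+ 2 * \sum_(i < k) v i 0 ^+ 2
    - 2 * (a * b) * d.
  rewrite /d !mulr_sumr -big_split -sumrB /=.
  by apply: eq_bigr => i _; ring.
rewrite -!sqr_norm2 -/a -/b; nra.
Qed.

Lemma norm2D k (u v : 'cV[R]_k) : norm2 (u + v) <= norm2 u + norm2 v.
Proof.
have u_ge0 := norm2_ge0 u; have v_ge0 := norm2_ge0 v.
rewrite -(ler_pXn2r (n := 2)) ?nnegrE ?addr_ge0 ?norm2_ge0 //.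
have -> : norm2 (u + v) ^+ 2 =
    norm2 u ^+ 2 + norm2 v ^+ 2 + 2 * \sum_(i < k) u i 0 * v i 0.
  rewrite !sqr_norm2 mulr_sumr -!big_split /=.
  by apply: eq_bigr => i _; rewrite mxE; ring.
have := cauchy_schwarz_norm2 u v; nra.
Qed.

Lemma norm2_sum k (I : finType) (F : I -> 'cV[R]_k) :
  norm2 (\sum_(i : I) F i) <= \sum_(i : I) norm2 (F i).
Proof.
apply: (big_ind2 (fun x y => norm2 x <= y)) => //; first by rewrite norm2_0.
by move=> x1 y1 x2 y2 le1 le2; apply: le_trans (norm2D _ _) (lerD le1 le2).
Qed.

Lemma norm2_mulmx_le_cols a b (M : 'M[R]_(a, b)) (x : 'cV[R]_b) :
  norm2 x <= 1 -> norm2 (M *m x) <= \sum_(j < b) norm2 (col j M).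
Proof.
move=> x_le1.
have -> : M *m x = \sum_(j < b) x j 0 *: col j M.
  apply/matrixP => i k; rewrite (ord1 k) !mxE summxE.
  by apply: eq_bigr => j _; rewrite !mxE mulrC.
apply: le_trans (norm2_sum _) _; apply: ler_sum => j _.
rewrite norm2Z ler_piMl ?norm2_ge0 //.
exact: le_trans (norm2_coord _ _) x_le1.
Qed.

Lemma norm2_mulmx_le_specnorm a b (M : 'M[R]_(a, b)) (x : 'cV[R]_b) :
  norm2 (M *m x) <= specnorm M * norm2 x.
Proof.
have unit_ball_le y : norm2 y <= 1 -> norm2 (M *m y) <= specnorm M.
  move=> y_le1; apply: sup_upper_bound; last by exists y.
  split; first by exists (norm2 (M *m 0)); exists 0; rewrite //= norm2_0 ler01.
  exists (\sum_(j < b) norm2 (col j M)) => _ [z z_le1 <-].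
  exact: norm2_mulmx_le_cols.
have [->|x0] := eqVneq x 0; first by rewrite mulmx0 !norm2_0 mulr0.
have x_gt0 := norm2_gt0 x0.
have := unit_ball_le ((norm2 x)^-1 *: x).
rewrite -scalemxAr !norm2Z ger0_norm ?invr_ge0 ?norm2_ge0 // mulVf ?gt_eqF //.
by rewrite lexx mulrC ler_pdivrMr // => /(_ isT).
Qed.

End EuclideanNorm.

Section Recurrence.
Variable R : realType.

Lemma sum_geometric_gt0 (b : R) N : 0 <= b -> (0 < N)%N ->
  0 < \sum_(i < N) b ^+ i.
Proof.
move=> b_ge0; case: N => // N _.
by rewrite big_ord_recl expr0 ltr_pwDl // sumr_ge0 // => i _; exact: exprn_ge0.
Qed.

(* A discrete Gronwall bound: a_(t+1) <= Σ_(s<=t) b^(t-s) e_s, summed over t. *)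
Lemma sum_le_of_linear_rec (a e : nat -> R) (b : R) : 0 <= b -> a 0%N = 0 ->
  (forall t, 0 <= e t) -> (forall t, a t.+1 <= b * a t + e t) ->
  forall N, \sum_(t < N) a t.+1 <= (\sum_(i < N) b ^+ i) * \sum_(t < N) e t.
Proof.
move=> b_ge0 a0 e_ge0 a_rec; elim=> [|N IH]; first by rewrite !big_ord0 mulr0.
have G_ge0 : 0 <= \sum_(i < N) b ^+ i.
  by apply: sumr_ge0 => i _; exact: exprn_ge0.
have E_le : \sum_(t < N) e t <= \sum_(t < N.+1) e t.
  by rewrite big_ord_recr /= lerDl.
have step : \sum_(t < N.+1) a t.+1 <=
    b * \sum_(t < N) a t.+1 + \sum_(t < N.+1) e t.
  apply: le_trans; first by apply: ler_sum => t _; exact: a_rec.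
  by rewrite big_split /= -mulr_sumr big_ord_recl a0 add0r.
apply: le_trans step _.
rewrite [X in _ <= X * _]big_ord_recl expr0 mulrDl mul1r [X in _ <= X]addrC lerD2r.
have -> : \sum_(i < N) b ^+ lift ord0 i = b * \sum_(i < N) b ^+ i.
  by rewrite mulr_sumr; apply: eq_bigr => i _; exact: exprS.
rewrite -mulrA ler_wpM2l //.
exact: le_trans IH (ler_wpM2l G_ge0 E_le).
Qed.

End Recurrence.

Section OutputError.
Variables (R : realType) (n m p N : nat).
Variables (B : 'M[R]_(n, m)) (C : 'M[R]_(p, n)) (Cd : 'M[R]_(n, p)).
Variables (x0 : 'cV[R]_n) (r : nat -> 'cV[R]_p).

Lemma MP_inverse_mulVmx : \rank C = n -> is_MP_inverse C Cd -> Cd *m C = 1%:M.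
Proof.
move=> rankC [CCdC _ _ _].
have /row_fullP [D DC] : row_full C by rewrite /row_full rankC.
by rewrite -[Cd *m C]mul1mx -DC -mulmxA (mulmxA C) CCdC.
Qed.

Hypothesis CdC : Cd *m C = 1%:M.

Lemma output_error_succ (A : 'M[R]_n) (U : 'M[R]_(m, N)) t :
  C *m traj A B U x0 t.+1 - r t.+1 =
  C *m A *m Cd *m (C *m traj A B U x0 t - refout C x0 r t)
  + (C *m A *m Cd *m refout C x0 r t + C *m B *m ucol U t - r t.+1).
Proof.
have CACdC : C *m A *m Cd *m C = C *m A by rewrite -mulmxA CdC mulmx1.
by rewrite /= mulmxBr mulmxA CACdC mulmxDr !mulmxA !addrA subrK.
Qed.

Lemma feas_AMOPUL2_MOPUL2 (ur : nat -> 'cV[R]_m) (om beta : R)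
    (omt : nat -> R) (S : set ('M[R]_n * 'M[R]_(m, N)))
    (A : 'M[R]_n) (U : 'M[R]_(m, N)) :
  0 < beta -> (0 < N)%N -> specnorm (C *m A *m Cd) <= beta ->
  feas_AMOPUL2 B C Cd x0 r ur (om / \sum_(i < N) beta ^+ i) omt S A U ->
  feas_MOPUL2 B C x0 r ur om omt S A U.
Proof.
move=> beta_gt0 N_gt0 specnorm_le [res_le ur_le SAU]; split=> //.
set G := \sum_(i < N) beta ^+ i.
have G_gt0 : 0 < G by apply: sum_geometric_gt0; rewrite ?ltW.
pose d t := C *m traj A B U x0 t - refout C x0 r t.
pose e t := C *m A *m Cd *m refout C x0 r t + C *m B *m ucol U t - r t.+1.
have d_rec t : norm2 (d t.+1) <= beta * norm2 (d t) + norm2 (e t).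
  rewrite [d t.+1]output_error_succ; apply: le_trans (norm2D _ _) _.
  rewrite lerD2r; apply: le_trans (norm2_mulmx_le_specnorm _ _) _.
  by rewrite ler_wpM2r ?norm2_ge0.
have d0 : norm2 (d 0%N) = 0 by rewrite /d /refout /= subrr norm2_0.
apply: le_trans
  (sum_le_of_linear_rec (ltW beta_gt0) d0 (fun t => norm2_ge0 (e t)) d_rec N) _.
rewrite -/G -(divfK (lt0r_neq0 G_gt0) om) [X in _ <= X]mulrC.
by rewrite ler_wpM2l ?(ltW G_gt0).
Qed.

End OutputError.

Theorem theorem7 (R : realType) (n m p N : nat)
  (hn : (0 < n)%N) (hm : (0 < m)%N) (hp : (0 < p)%N) (hN : (0 < N)%N)
  (B : 'M[R]_(n, m)) (C : 'M[R]_(p, n)) (hC : \rank C = n)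
  (Cd : 'M[R]_(n, p)) (hCd : is_MP_inverse C Cd)
  (x0 : 'cV[R]_n) (r : nat -> 'cV[R]_p) (Ar : 'M[R]_n) (ur : nat -> 'cV[R]_m)
  (om : R) (omt : nat -> R) (hom : 0 <= om)
  (homt : forall t : nat, (t < N)%N -> 0 <= omt t)
  (SM2 : set ('M[R]_n * 'M[R]_(m, N))) (beta : R) (hbeta : 0 < beta) :
  let omtil := om / (\sum_(i < N) beta ^+ i) in
  (forall (Aa : 'M[R]_n) (U : 'M[R]_(m, N)),
      feas_AMOPUL2 B C Cd x0 r ur omtil omt SM2 Aa U ->
      specnorm (C *m Aa *m Cd) <= beta) ->
  (forall (A : 'M[R]_n) (U : 'M[R]_(m, N)),
      feas_AMOPUL2 B C Cd x0 r ur omtil omt SM2 A U ->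
      feas_MOPUL2 B C x0 r ur om omt SM2 A U) /\
  (ereal_inf [set (frob (AU.1 - Ar))%:E | AU in
       [set AU : 'M[R]_n * 'M[R]_(m, N) |
          feas_MOPUL2 B C x0 r ur om omt SM2 AU.1 AU.2]]
   <= ereal_inf [set (frob (AU.1 - Ar))%:E | AU in
       [set AU : 'M[R]_n * 'M[R]_(m, N) |
          feas_AMOPUL2 B C Cd x0 r ur omtil omt SM2 AU.1 AU.2]])%E.
Proof.
move=> omtil specnorm_le.
have CdC := MP_inverse_mulVmx hC hCd.
have feas A U : feas_AMOPUL2 B C Cd x0 r ur omtil omt SM2 A U ->
    feas_MOPUL2 B C x0 r ur om omt SM2 A U.
  move=> AUf; apply: (feas_AMOPUL2_MOPUL2 CdC hbeta hN (specnorm_le A U AUf)).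
  exact: AUf.
split=> //.
by apply/ereal_inf_le_tmp/image_subset => AU; exact: feas.
Qed.
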